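(* Let $M$ be a simple binary matroid and $C$ a circuit of $M$. The following are equivalent: (1) $C\notin B_M$; (2) there are circuits $C_1,C_2$ of $M$ such that $|C_1\cap C_2|=1$ and $C_1\triangle C_2=C$.
   Context: A matroid $M=([n],\mathscr C)$ is given by its circuit set $\mathscr C$. It is simple if every circuit has cardinality greater than $2$, and binary if it is representable over $\mathbb F_2$. Let ${\bf TP}^{n-1}$ be the tropical projective space over $(\mathbb R\cup\{-\infty\},\max,+)$. For a circuit $C$, $V(C)$ is the set of $x\in{\bf TP}^{n-1}$ such that $\max\{x_i:i\in C\}$ is attained at least twice. For $B\subseteq\mathscr C$, set $V(B)=\bigcap_{C\in B}V(C)$. A subset $B\subseteq\mathscr C$ is a tropical basis if $V(B)=V(\mathscr C)$. $B_M$ denotes the intersection of all tropical bases of $M$. $\triangle$ denotes symmetric difference. *)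

From mathcomp Require Import all_boot all_order all_algebra.
From Stdlib Require Reals.
Set Implicit Arguments.
Unset Strict Implicit.
Unset Printing Implicit Defensive.

Definition matroid_circuits (n : nat) (Cs : {set {set 'I_n}}) : Prop :=
  [/\ set0 \notin Cs,
      (forall C1 C2, C1 \in Cs -> C2 \in Cs -> C1 \subset C2 -> C1 = C2) &
      (forall C1 C2 e, C1 \in Cs -> C2 \in Cs -> C1 != C2 -> e \in C1 :&: C2 ->
         exists2 C3, C3 \in Cs & C3 \subset (C1 :|: C2) :\ e)].

Definition simple_matroid (n : nat) (Cs : {set {set 'I_n}}) : Prop :=
  forall C, C \in Cs -> 2 < #|C|.

Definition dependent_cols (m n : nat) (A : 'M['F_2]_(m, n)) (D : {set 'I_n}) : Prop :=
  exists v : 'cV['F_2]_n,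
    [/\ (v != 0)%R, (forall i, i \notin D -> v i ord0 = 0%R) & (A *m v = 0)%R].

Definition col_circuit (m n : nat) (A : 'M['F_2]_(m, n)) (C : {set 'I_n}) : Prop :=
  dependent_cols A C /\ (forall D : {set 'I_n}, D \proper C -> ~ dependent_cols A D).

Definition binary_matroid (n : nat) (Cs : {set {set 'I_n}}) : Prop :=
  exists m (A : 'M['F_2]_(m, n)), forall C, C \in Cs <-> col_circuit A C.

(* Tropical numbers R \cup {-oo}: None = -oo. *)
Definition trop := option Reals.Rdefinitions.R.
Definition trop_le (a b : trop) : Prop :=
  match a, b with
  | None, _ => True
  | Some _, None => False
  | Some x, Some y => Reals.Rdefinitions.Rle x y
  end.

(* Points of TP^{n-1} are represented by their representatives in
   (R \cup {-oo})^n that are not identically -oo; all the sets V(.) below are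
   invariant under tropical scaling (adding a real constant), so this is
   equivalent to working in the quotient. *)
Definition TPpoint (n : nat) (x : 'I_n -> trop) : Prop := exists i, x i <> None.

Definition inV (n : nat) (C : {set 'I_n}) (x : 'I_n -> trop) : Prop :=
  exists i j, [/\ i \in C, j \in C, i != j, x i = x j &
                  forall k, k \in C -> trop_le (x k) (x i)].

Definition inVB (n : nat) (B : {set {set 'I_n}}) (x : 'I_n -> trop) : Prop :=
  forall C, C \in B -> inV C x.

Definition tropical_basis (n : nat) (Cs B : {set {set 'I_n}}) : Prop :=
  B \subset Cs /\
  (forall x, TPpoint x -> (inVB B x <-> inVB Cs x)).

Definition in_BM (n : nat) (Cs : {set {set 'I_n}}) (C : {set 'I_n}) : Prop :=
  forall B, tropical_basis Cs B -> C \in B.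

Definition symdiff (n : nat) (A B : {set 'I_n}) : {set 'I_n} := (A :\: B) :|: (B :\: A).

(* Write Δ for symmetric difference.
   (2) -> (1): if [C = C1 Δ C2] with [C1 :&: C2 = {e}], then
   V(C1) :&: V(C2) is contained in V(C), so removing C from the circuits
   leaves a tropical basis.
   (1) -> (2): let B be a tropical basis avoiding C. The point that is -1 on
   [C :\ e] and 0 elsewhere lies outside V(C), hence outside V(D) for some
   circuit D of B; this forces D to have exactly one element f outside C.
   Over F_2, C Δ D is a cycle through f, so it contains a circuit S through f;
   then D :&: S = {f}, and D Δ S is a nonempty cycle inside C, hence equal to
   C. *)

From mathcomp Require Import all_boot all_order all_algebra.
From Stdlib Require Reals.
From Stdlib Require Import Lra Classical.
Import GRing.Theory.

Set Implicit Arguments.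
Unset Strict Implicit.
Unset Printing Implicit Defensive.

Lemma trop_le_trans (a b c : trop) : trop_le a b -> trop_le b c -> trop_le a c.
Proof.
by case: a => [a|]; case: b => [b|]; case: c => [c|] //=; apply: Reals.RIneq.Rle_trans.
Qed.

Lemma trop_le_anti (a b : trop) : trop_le a b -> trop_le b a -> a = b.
Proof.
by case: a => [a|]; case: b => [b|] //= ab ba; rewrite (Reals.RIneq.Rle_antisym _ _ ab ba).
Qed.

Lemma trop_le_total (a b : trop) : trop_le a b \/ trop_le b a.
Proof. by case: a => [a|]; case: b => [b|] /=; auto; lra. Qed.

Section SymmetricDifference.
Variable n : nat.
Implicit Types (S T : {set 'I_n}) (e k : 'I_n).

Lemma in_symdiff S T k :
  (k \in symdiff S T) = (k \in S) && (k \notin T) || (k \in T) && (k \notin S).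
Proof. by rewrite !inE andbC [(k \in T) && _]andbC. Qed.

Lemma symdiffC S T : symdiff S T = symdiff T S.
Proof. by rewrite /symdiff setUC. Qed.

Lemma setD1_sub_symdiff S T e : S :&: T = [set e] -> S :\ e \subset symdiff S T.
Proof.
move=> STe; apply/subsetP => k; rewrite !inE => /andP[ke kS].
by rewrite kS orbF andbT; apply: contra ke => kT; rewrite -in_set1 -STe inE kS.
Qed.

Lemma symdiff_subset S T : T \subset S -> symdiff S T = S :\: T.
Proof. by rewrite -setD_eq0 /symdiff => /eqP->; rewrite setU0. Qed.

Lemma symdiff_sub_setU S T : symdiff S T \subset S :|: T.
Proof.
apply/subsetP => k; rewrite in_symdiff inE.
by case/orP=> /andP[-> _]; rewrite ?orbT.
Qed.

End SymmetricDifference.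

Section TropicalVarieties.
Variable n : nat.
Implicit Types (C D : {set 'I_n}) (x : 'I_n -> trop).

Lemma distinct_pair_setD1 C x e i j :
  i \in C -> j \in C -> i != j -> x i = x j -> exists2 p, p \in C :\ e & x p = x i.
Proof.
move=> iC jC ij xij; case: (eqVneq i e) => [ie|ie].
  by exists j; rewrite // !inE jC andbT -ie eq_sym.
by exists i; rewrite // !inE ie.
Qed.

Lemma inV_symdiff C1 C2 e x :
  C1 :&: C2 = [set e] -> inV C1 x -> inV C2 x -> inV (symdiff C1 C2) x.
Proof.
move=> C12e [i1 [j1 [i1C j1C ij1 x1 max1]]] [i2 [j2 [i2C j2C ij2 x2 max2]]].
wlog le21 : C1 C2 C12e i1 j1 i1C j1C ij1 x1 max1 i2 j2 i2C j2C ij2 x2 max2 /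
  trop_le (x i2) (x i1).
  move=> wlog_le; case: (trop_le_total (x i2) (x i1)) => le.
    exact: (wlog_le C1 C2 C12e i1 j1 _ _ _ _ _ i2 j2).
  rewrite symdiffC setIC in C12e *.
  exact: (wlog_le C2 C1 C12e i2 j2 _ _ _ _ _ i1 j1).
have sub1 := subsetP (setD1_sub_symdiff C12e).
have sub2 : {subset C2 :\ e <= symdiff C1 C2}.
  by rewrite symdiffC; apply/subsetP/setD1_sub_symdiff; rewrite setIC.
have max12 k : k \in symdiff C1 C2 -> trop_le (x k) (x i1).
  move/(subsetP (symdiff_sub_setU C1 C2)); rewrite inE => /orP[/max1 //|/max2 k2].
  exact: trop_le_trans k2 le21.
case: (classic (x e = x i1)) => [xe|xe]; last first.
  have ne k : x k = x i1 -> k != e by move=> xk; apply: contra_notN xe => /eqP <-.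
  by exists i1, j1; split=> //; apply: sub1; rewrite !inE ne.
have [p1 p1C xp1] := distinct_pair_setD1 e i1C j1C ij1 x1.
have [p2 p2C xp2] := distinct_pair_setD1 e i2C j2C ij2 x2.
have eC2 : e \in C2 by move: (set11 e); rewrite -C12e inE => /andP[].
have x21 : x i2 = x i1 by apply: trop_le_anti => //; rewrite -xe; apply: max2.
exists p1, p2; split; [exact: sub1 | exact: sub2 | | by rewrite xp1 xp2 x21 |].
- apply: contraTneq p2C => <-; move: p1C; rewrite !inE => /andP[p1e p1C1].
  by apply/negP => /andP[_ p1C2]; move: p1e; rewrite -in_set1 -C12e inE p1C1 p1C2.
- by move=> k /max12; rewrite xp1.
Qed.
End TropicalVarieties.

Section IndicatorPoint.
Variable n : nat.
Implicit Types (C D : {set 'I_n}) (e : 'I_n).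

(* Equal to 0 off [C :\ e] and to -1 on it: the maximum over [C] is attained
   only at [e], but twice on any set with two elements outside [C]. *)
Definition trop_point C e (i : 'I_n) : trop :=
  if i \in C :\ e then Some (Reals.Rdefinitions.Ropp Reals.Rdefinitions.R1)
  else Some Reals.Rdefinitions.R0.

Lemma trop_point_TP C e : TPpoint (trop_point C e).
Proof. by exists e; rewrite /trop_point; case: ifP. Qed.

Lemma trop_point_notin_V C e : e \in C -> ~ inV C (trop_point C e).
Proof.
rewrite /trop_point => eC [i [j [iC jC ij xij max]]].
have := max e eC; rewrite !inE eqxx /=.
case: (eqVneq i e) => [ie|_]; last by rewrite iC /=; lra.
by move: xij; subst i; rewrite !inE eqxx jC eq_sym ij => -[]; lra.
Qed.

Lemma inV_trop_point C D e : 1 < #|D :\: C| -> inV D (trop_point C e).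
Proof.
case/card_gt1P => i [j [iDC jDC ij]]; move: iDC jDC; rewrite !inE.
move=> /andP[iC iD] /andP[jC jD]; exists i, j; split => //.
  by rewrite /trop_point !inE (negbTE iC) (negbTE jC) !andbF.
by move=> k _; rewrite /trop_point !inE (negbTE iC) andbF; case: ifP => _ /=; lra.
Qed.

End IndicatorPoint.

Lemma tropical_basis_circuit_one_outside n (Cs B : {set {set 'I_n}}) C :
  (forall C1 C2, C1 \in Cs -> C2 \in Cs -> C1 \subset C2 -> C1 = C2) ->
  tropical_basis Cs B -> C \in Cs -> C \notin B -> C != set0 ->
  exists2 D, D \in Cs & exists f, D :\: C = [set f].
Proof.
move=> clutter [BCs VB] CCs CB /set0Pn[e eC].
set x := trop_point C e.
have [D DB DxV] : exists2 D, D \in B & ~ inV D x.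
  apply: NNPP => allV; apply: (trop_point_notin_V eC).
  apply: (proj1 (VB x (trop_point_TP C e))) CCs => D DB.
  by apply: NNPP => DxV; apply: allV; exists D.
have DCs := subsetP BCs D DB.
exists D => //; apply/cards1P; rewrite eqn_leq; apply/andP; split.
  by rewrite leqNgt; apply/negP => /(inV_trop_point e).
rewrite card_gt0; apply: contraNneq CB => /eqP; rewrite setD_eq0 => DC.
by rewrite -(clutter _ _ DCs CCs DC).
Qed.

Lemma tropical_basis_setD1_symdiff n (Cs : {set {set 'I_n}}) C1 C2 :
  C1 \in Cs -> C2 \in Cs -> #|C1 :&: C2| = 1 ->
  tropical_basis Cs (Cs :\ symdiff C1 C2).
Proof.
move=> C1Cs C2Cs /eqP/cards1P[e C12e].
have [eC1 eC2] : e \in C1 /\ e \in C2 by apply/andP; rewrite -in_setI C12e set11.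
have eS : e \notin symdiff C1 C2 by rewrite in_symdiff eC1 eC2.
have C1B : C1 \in Cs :\ symdiff C1 C2.
  by rewrite !inE C1Cs andbT; apply: contraNneq eS => <-.
have C2B : C2 \in Cs :\ symdiff C1 C2.
  by rewrite !inE C2Cs andbT; apply: contraNneq eS => <-.
split=> [|x _]; first exact: subsetDl.
split=> [VB D DCs|VCs D /setD1P[_ /VCs] //].
case: (eqVneq D (symdiff C1 C2)) => [->|DS].
  exact: inV_symdiff C12e (VB _ C1B) (VB _ C2B).
by apply: VB; rewrite !inE DS.
Qed.

Lemma symdiff_notin_BM n (Cs : {set {set 'I_n}}) C1 C2 :
  C1 \in Cs -> C2 \in Cs -> #|C1 :&: C2| = 1 -> ~ in_BM Cs (symdiff C1 C2).
Proof.
move=> C1Cs C2Cs C12 BM.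
by have := BM _ (tropical_basis_setD1_symdiff C1Cs C2Cs C12); rewrite !inE eqxx.
Qed.

Section BinaryCircuits.
Variables (m n : nat) (A : 'M['F_2]_(m, n)).
Implicit Types (C D R S T : {set 'I_n}).
Local Open Scope ring_scope.

Definition chi S : 'cV['F_2]_n := \col_i (i \in S)%:R.

Lemma chiE S i j : chi S i j = (i \in S)%:R.
Proof. by rewrite mxE. Qed.

Lemma chi_support (v : 'cV['F_2]_n) : v = chi [set i | v i ord0 != 0].
Proof.
apply/matrixP => i j; rewrite (ord1 j) chiE inE.
by case: (v i ord0) => [[|[|k]] //] lt_k_2; apply: val_inj.
Qed.

Lemma chiD S T : chi S + chi T = chi (symdiff S T).
Proof.
apply/matrixP => i j; rewrite !mxE in_symdiff.
by case: (i \in S); case: (i \in T); rewrite ?addr0 ?add0r //; apply: val_inj.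
Qed.

Lemma chi_eq0 S : (chi S == 0) = (S == set0).
Proof.
apply/eqP/eqP => [/matrixP chi0 | ->]; last by apply/matrixP => i j; rewrite !mxE inE.
by apply/setP => i; have := chi0 i ord0; rewrite !mxE inE; case: (i \in S).
Qed.

Lemma dependent_colsP D :
  dependent_cols A D <-> exists S, [/\ S != set0, S \subset D & A *m chi S = 0].
Proof.
split=> [[v [v0 vD Av]] | [S [S0 SD AS]]].
  exists [set i | v i ord0 != 0]; rewrite -chi_support -chi_eq0 -chi_support.
  split=> //; apply/subsetP => i; rewrite inE; apply: contraR => iD.
  by rewrite vD.
exists (chi S); split=> [|i iD|//]; first by rewrite chi_eq0.
by rewrite chiE (contraNF (subsetP SD i) iD).
Qed.

Lemma kernel_symdiff S T :
  A *m chi S = 0 -> A *m chi T = 0 -> A *m chi (symdiff S T) = 0.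
Proof. by move=> AS AT; rewrite -chiD mulmxDr AS AT addr0. Qed.

Lemma col_circuit_min C S :
  col_circuit A C -> S != set0 -> S \subset C -> A *m chi S = 0 -> S = C.
Proof.
move=> [_ minC] S0 SC AS; apply/eqP; rewrite eqEproper SC /=.
by apply/negP => SC'; apply: (minC S SC'); apply/dependent_colsP; exists S.
Qed.

Lemma col_circuit_kernel C : col_circuit A C -> A *m chi C = 0.
Proof.
move=> circC; have [/dependent_colsP[S [S0 SC AS]] _] := circC.
by rewrite -(col_circuit_min circC S0 SC AS).
Qed.

(* A smallest [S] is a circuit: for a nonempty kernel set [T] properly inside
   it, either [T] or [S :\: T] would be a smaller kernel set containing [f]. *)
Lemma kernel_circuit_through R f :
  f \in R -> A *m chi R = 0 -> exists S, [/\ f \in S, S \subset R & col_circuit A S].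
Proof.
move=> fR AR; pose P S := [&& f \in S, S \subset R & A *m chi S == 0].
have PR : P R by rewrite /P fR subxx AR eqxx.
case: (arg_minnP (fun S => #|S|) PR) => S /and3P[fS SR /eqP AS] minS.
exists S; split=> //; split=> [|D DS /dependent_colsP[T [T0 TD AT]]].
  by apply/dependent_colsP; exists S; split=> //; apply/set0Pn; exists f.
have TS : T \proper S := sub_proper_trans TD DS.
have [fT|fT] := boolP (f \in T).
  have := minS T; rewrite /P fT (subset_trans (proper_sub TS) SR) AT eqxx.
  by move/(_ isT); rewrite leqNgt proper_card.
have ST := symdiff_subset (proper_sub TS).
have := minS (S :\: T); rewrite /P inE fS fT (subset_trans (subsetDl S T) SR).
rewrite -ST (kernel_symdiff AS AT) eqxx => /(_ isT); rewrite ST leqNgt.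
rewrite cardsDS ?(proper_sub TS) // ltn_subrL card_gt0 T0 /= => /negP; apply.
by apply/card_gt0P; exists f.
Qed.

Lemma col_circuit_symdiff_split C D f :
  col_circuit A C -> col_circuit A D -> (1 < #|D|)%N -> D :\: C = [set f] ->
  exists2 S, col_circuit A S & D :&: S = [set f] /\ symdiff D S = C.
Proof.
move=> circC circD D_gt1 DCf.
have /setDP[fD fC] : f \in D :\: C by rewrite DCf set11.
have fCD : f \in symdiff C D by rewrite in_symdiff fD fC orbT.
have AC := col_circuit_kernel circC; have AD := col_circuit_kernel circD.
have [S [fS SCD circS]] := kernel_circuit_through fCD (kernel_symdiff AC AD).
have DSf : D :&: S = [set f].
  apply/setP => g; rewrite !inE; apply/andP/eqP => [[gD gS]|->]; last by split.
  apply/set1P; rewrite -DCf inE gD andbT.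
  by move: (subsetP SCD g gS); rewrite in_symdiff gD andbF.
have DS_C : symdiff D S \subset C.
  apply/subsetP => g; rewrite in_symdiff => /orP[/andP[gD gS]|/andP[gS gD]].
    apply: contraR gS => gC; have : g \in D :\: C by rewrite inE gC gD.
    by rewrite DCf => /set1P ->.
  by move: (subsetP SCD g gS); rewrite in_symdiff (negbTE gD) andbT orbF.
exists S => //; split=> //.
apply: col_circuit_min circC _ DS_C (kernel_symdiff AD (col_circuit_kernel circS)).
apply: contraTneq D_gt1 => DS0.
have DS : D \subset S by rewrite -setD_eq0 -subset0 -DS0 subsetUl.
by rewrite -leqNgt -(setIidPl DS) DSf cards1.
Qed.

End BinaryCircuits.

Theorem proposition4 (n : nat) (Cs : {set {set 'I_n}}) (C : {set 'I_n}) :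
  matroid_circuits Cs -> simple_matroid Cs -> binary_matroid Cs -> C \in Cs ->
  (~ in_BM Cs C <->
   exists C1 C2, [/\ C1 \in Cs, C2 \in Cs, #|C1 :&: C2| = 1 & symdiff C1 C2 = C]).
Proof.
move=> [_ clutter _] simple [m [A circuitsA]] CCs; split; last first.
  by case=> [C1 [C2 [C1Cs C2Cs C12 <-]]]; apply: symdiff_notin_BM.
move=> notBM; have [B basisB CB] : exists2 B, tropical_basis Cs B & C \notin B.
  apply: NNPP => noB; apply: notBM => B basisB.
  by apply: NNPP => CB; apply: noB; exists B => //; apply/negP.
have C0 : C != set0 by rewrite -card_gt0 (ltn_trans _ (simple C CCs)).
have [D DCs [f DCf]] := tropical_basis_circuit_one_outside clutter basisB CCs CB C0.
have [S circS [DSf DSC]] := col_circuit_symdiff_split ((circuitsA C).1 CCs)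
  ((circuitsA D).1 DCs) (ltnW (simple D DCs)) DCf.
by exists D, S; split=> //; [apply/circuitsA | rewrite DSf cards1].
Qed.
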